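(* For every $\varepsilon\in(0,1)$ and $\beta\in(0,\varepsilon/400)$ there exists $k_0$ such that for all $k\ge k_0$ and all real $a\ge 1/2$ the following holds. Let $G$ be a graph with $\delta(G)\ge (a+\varepsilon)k$ and $|G|\le 100k$. Then there exists a subgraph $H$ of $G$, obtained by deleting at most $200\beta|G|$ vertices, such that $\delta(H)\ge (a+\varepsilon-400\beta)k$ and each connected component of $H$ is $(\beta^2/20000)$-cut-dense.
   Context: Graphs are finite and simple; $|G|$ is the number of vertices and $\delta(G)$ the minimum degree. For $\rho\ge 0$, a graph $G$ is $\rho$-cut-dense if there is no partition of $V(G)$ into two sets $A,B$ with $e(A,B)<\rho|A||B|$, where $e(A,B)$ is the number of edges with one endpoint in $A$ and the other in $B$. *)

From mathcomp Require Import all_boot all_order all_algebra.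
Set Implicit Arguments. Unset Strict Implicit. Unset Printing Implicit Defensive.
Import Order.TTheory GRing.Theory Num.Theory.
Local Open Scope ring_scope.

Definition simple_graph (T : finType) (e : rel T) : Prop :=
  symmetric e /\ irreflexive e.

Definition deg (T : finType) (e : rel T) (x : T) : nat := #|[set y | e x y]|.

(* e(A,B): number of edges with one endpoint in A and the other in B
   (A, B disjoint in all uses), counted as ordered pairs (a,b), a in A, b in B. *)
Definition e_between (T : finType) (e : rel T) (A B : {set T}) : nat :=
  #|[set p : T * T | (p.1 \in A) && (p.2 \in B) && e p.1 p.2]|.

Definition cut_dense (R : realFieldType) (rho : R) (T : finType) (e : rel T)
    (C : {set T}) : Prop :=
  forall A : {set T}, A \subset C ->
    rho * (#|A|%:R) * (#|C :\: A|%:R) <= (e_between e A (C :\: A))%:R.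

Definition subgraph_of (T : finType) (e : rel T) (S : {set T}) (f : rel T) : Prop :=
  symmetric f /\
  (forall x y, f x y -> e x y) /\
  (forall x y, f x y -> (x \in S) && (y \in S)).

Definition component (T : finType) (S : {set T}) (f : rel T) (x : T) : {set T} :=
  [set y in S | connect f x y].

(* Among pairs (S, F) of a vertex set S and a symmetric set F of edges of G
   inside S, with at most beta k vertices deleted, minimise the potential
     (edges leaving S) + (edges of G[S] not in F)
       - rho (ordered pairs of S not joined in F) - c |V \ S|,
   where rho = beta^2/20000 and c = (a + eps) k - 200 beta k.  Deleting a
   vertex x changes the potential by at most deg_F x + 2 rho |G| - c, and
   removing the F-edges between A and C \ A inside a component C changes it by
   at most 2 e(A, C \ A) - 2 rho |A| |C \ A|; minimality thus gives the degree
   bound and cut-density.  Comparing with (V, E(G)), the minimum is <= 0, while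
   each deleted vertex loses at least (a + eps) k - beta k edges; hence
   at most beta |G| / 39800 vertices are deleted, so the deletion budget is never
   exhausted and the degree argument applies. *)

From mathcomp Require Import all_boot all_order all_algebra.
From mathcomp Require Import reals.
From mathcomp Require Import ring lra zify.
Import Order.TTheory GRing.Theory Num.Theory.
Set Implicit Arguments. Unset Strict Implicit. Unset Printing Implicit Defensive.
Local Open Scope ring_scope.

Section PairSets.

Variable T : finType.
Implicit Types (e : rel T) (S A B : {set T}) (F : {set T * T}) (x : T).

Definition pairs_rel F : rel T := fun u v => (u, v) \in F.

Definition edges_within e S F :=
  [forall p in F, [&& e p.1 p.2, p.1 \in S, p.2 \in S & (p.2, p.1) \in F]].

Lemma edges_withinP e S F : edges_within e S F ->
  forall u v, (u, v) \in F -> [/\ e u v, u \in S, v \in S & (v, u) \in F].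
Proof. by move=> /forall_inP wf u v /wf /and4P. Qed.

Lemma edges_within_sym e S F : edges_within e S F -> symmetric (pairs_rel F).
Proof.
by move=> wf u v; apply/idP/idP => /(edges_withinP wf) [].
Qed.

Lemma edges_within_subgraph e S F :
  edges_within e S F -> subgraph_of e S (pairs_rel F).
Proof.
move=> wf; split; first exact: edges_within_sym wf.
by split=> u v /(edges_withinP wf) [euv uS vS _]; rewrite ?euv ?uS ?vS.
Qed.

Lemma edges_within_full e :
  symmetric e -> edges_within e [set: T] [set p | e p.1 p.2].
Proof.
move=> esym; apply/forall_inP => -[u v]; rewrite !inE /= => euv.
by rewrite euv esym.
Qed.

Definition del_pairs F x := [set p in F | (p.1 != x) && (p.2 != x)].

Definition cut_pairs A B := setX A B :|: setX B A.

Lemma edges_within_del e S F x :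
  edges_within e S F -> edges_within e (S :\ x) (del_pairs F x).
Proof.
move=> wf; apply/forall_inP => -[u v]; rewrite !inE /= => /and3P[uvF ux vx].
by have [-> -> -> ->] := edges_withinP wf uvF; rewrite ux vx.
Qed.

Lemma edges_within_cut e S F A B :
  edges_within e S F -> edges_within e S (F :\: cut_pairs A B).
Proof.
move=> wf; apply/forall_inP => -[u v]; rewrite !inE /= => /andP[uv_cut uvF].
have [-> -> -> ->] := edges_withinP wf uvF.
by rewrite andbT orbC [(v \in A) && _]andbC [(v \in B) && _]andbC.
Qed.

Lemma card_cut_pairs A B :
  [disjoint A & B] -> #|cut_pairs A B| = (2 * (#|A| * #|B|))%N.
Proof.
move=> dAB; rewrite cardsU !cardsX mulnC [(#|B| * _)%N]mulnC.
suff -> : setX A B :&: setX B A = set0 by rewrite cards0 subn0 mul2n addnn.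
apply/setP => -[u v]; rewrite !inE /=.
apply/negP => /andP[/andP[uA _] /andP[uB _]].
by move/disjointFr: dAB => /(_ u uA); rewrite uB.
Qed.

Definition boundary_pairs e S :=
  [set p | e p.1 p.2 && (p.1 \notin S) && (p.2 \in S)].

Definition discarded_pairs e S F :=
  [set p | e p.1 p.2 && (p.1 \in S) && (p.2 \in S) && (p \notin F)].

Definition lost_pairs e S F :=
  (#|boundary_pairs e S| + #|discarded_pairs e S F|)%N.

Definition disconnected_pairs S F :=
  [set p | (p.1 \in S) && (p.2 \in S) && ~~ connect (pairs_rel F) p.1 p.2].

Lemma lost_pairs_del e S F x : edges_within e S F -> x \in S ->
  (lost_pairs e (S :\ x) (del_pairs F x)
     <= lost_pairs e S F + deg (pairs_rel F) x)%N.
Proof.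
move=> wf xS.
set kept := setX [set x] [set y | pairs_rel F x y].
set dropped := [set p | (p.1 == x) && e p.1 p.2 && (p.2 \in S) && (p \notin F)].
have sub_bd : boundary_pairs e (S :\ x) \subset boundary_pairs e S :|: kept :|: dropped.
  apply/subsetP => -[u v]; rewrite !inE /= negb_and negbK.
  case/andP => /andP[euv /orP[/eqP ux | ->]] /andP[_ ->]; last by rewrite euv.
  by subst u; rewrite eqxx euv /pairs_rel; case: ((x, v) \in F); rewrite ?orbT.
have sub_dc : discarded_pairs e (S :\ x) (del_pairs F x) :|: dropped
    \subset discarded_pairs e S F.
  apply/subsetP => -[u v]; rewrite !inE /=.
  case/orP => [/andP[/and3P[/and3P[-> ux ->] vx ->]]
              |/andP[/andP[/andP[/eqP -> ->] ->] ->]].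
    by rewrite ux vx !andbT.
  by rewrite xS.
have disj : [disjoint discarded_pairs e (S :\ x) (del_pairs F x) & dropped].
  by apply/pred0P => -[u v] /=; rewrite !inE /=; case: (u == x); rewrite /= ?andbF.
have card_kept : #|kept| = deg (pairs_rel F) x by rewrite cardsX cards1 mul1n.
have := subset_leq_card sub_bd.
move: (subset_leq_card sub_dc); rewrite cardsU (disjoint_setI0 disj) cards0 subn0.
have := leq_of_leqif (leq_card_setU (boundary_pairs e S :|: kept) dropped).
have := leq_of_leqif (leq_card_setU (boundary_pairs e S) kept).
rewrite /lost_pairs; lia.
Qed.

Lemma connect_pairs_sub F F' : F' \subset F ->
  subrel (connect (pairs_rel F')) (connect (pairs_rel F)).
Proof.
move=> sF'F; apply: connect_sub => u v uv.
by apply: connect1; apply: (subsetP sF'F).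
Qed.

Lemma disconnected_pairs_del S F x :
  (#|disconnected_pairs S F|
     <= #|disconnected_pairs (S :\ x) (del_pairs F x)| + 2 * #|T|)%N.
Proof.
set D' := disconnected_pairs (S :\ x) (del_pairs F x).
set from_x := setX [set x] [set: T]; set to_x := setX [set: T] [set x].
have sub : disconnected_pairs S F \subset D' :|: from_x :|: to_x.
  apply/subsetP => -[u v]; rewrite !inE /= => /andP[/andP[uS vS] not_uv].
  case: (eqVneq u x) => [->|ux]; first by rewrite andbT orbT.
  case: (eqVneq v x) => [->|vx]; first by rewrite orbT.
  rewrite uS vS !orbF /=; apply: contra not_uv; apply: connect_pairs_sub.
  by apply/subsetP => p; rewrite inE => /andP[].
have := subset_leq_card sub.
have := leq_of_leqif (leq_card_setU (D' :|: from_x) to_x).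
have := leq_of_leqif (leq_card_setU D' from_x).
rewrite !cardsX cards1 cardsT; lia.
Qed.

Lemma e_between_sym (f : rel T) A B :
  symmetric f -> e_between f B A = e_between f A B.
Proof.
move=> fsym; rewrite /e_between.
have -> : [set p : T * T | (p.1 \in B) && (p.2 \in A) && f p.1 p.2]
    = swap_pair @: [set p : T * T | (p.1 \in A) && (p.2 \in B) && f p.1 p.2].
  rewrite (can_imset_pre _ swap_pairK).
  by apply/setP => -[u v]; rewrite !inE /= fsym [(u \in B) && _]andbC.
exact: card_imset (can_inj swap_pairK).
Qed.

Lemma lost_pairs_cut e S F A B : edges_within e S F ->
  (lost_pairs e S (F :\: cut_pairs A B)
     <= lost_pairs e S F + 2 * e_between (pairs_rel F) A B)%N.
Proof.
move=> wf.
set EAB := [set p | (p.1 \in A) && (p.2 \in B) && pairs_rel F p.1 p.2].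
set EBA := [set p | (p.1 \in B) && (p.2 \in A) && pairs_rel F p.1 p.2].
have sub : discarded_pairs e S (F :\: cut_pairs A B)
    \subset discarded_pairs e S F :|: EAB :|: EBA.
  apply/subsetP => -[u v]; rewrite !inE /= negb_and negbK.
  case/andP => /andP[/andP[euv uS] vS] /orP[uv_cut | ->]; last by rewrite euv uS vS.
  rewrite /pairs_rel; case: ((u, v) \in F); last by rewrite euv uS vS.
  by rewrite !andbT -orbA orbC; move: uv_cut => /orP[] ->; rewrite ?orbT.
have := subset_leq_card sub.
have := leq_of_leqif (leq_card_setU (discarded_pairs e S F :|: EAB) EBA).
have := leq_of_leqif (leq_card_setU (discarded_pairs e S F) EAB).
have -> : #|EBA| = e_between (pairs_rel F) A B.
  exact: e_between_sym (edges_within_sym wf).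
rewrite /lost_pairs -/(e_between (pairs_rel F) A B); lia.
Qed.

Lemma disconnected_pairs_cut e S F A x0 : edges_within e S F ->
  A \subset component S (pairs_rel F) x0 ->
  (#|disconnected_pairs S F| + 2 * (#|A| * #|component S (pairs_rel F) x0 :\: A|)
     <= #|disconnected_pairs S
            (F :\: cut_pairs A (component S (pairs_rel F) x0 :\: A))|)%N.
Proof.
move=> wf; set C := component S (pairs_rel F) x0 => sAC.
have symF := sym_connect_sym (edges_within_sym wf).
have CS u : u \in C -> u \in S by rewrite inE => /andP[].
have connC u v : u \in C -> v \in C -> connect (pairs_rel F) u v.
  rewrite !inE => /andP[_ x0u] /andP[_ x0v].
  by apply: connect_trans x0v; rewrite symF.
have closedC u v : (u, v) \in F -> u \in C -> v \in C.
  move=> uvF; have [_ _ vS _] := edges_withinP wf uvF.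
  rewrite !inE vS => /andP[_ x0u].
  by apply: connect_trans x0u _; apply: connect1.
clearbody C; set F' := F :\: cut_pairs A (C :\: A).
have AC u : u \in A -> u \in C by apply: (subsetP sAC).
have cutP u v : (u, v) \in cut_pairs A (C :\: A) ->
    [/\ u \in C, v \in C & (u \in A) != (v \in A)].
  rewrite !inE /= => /orP[/and3P[uA /negbTE-> ->] | /andP[/andP[/negbTE-> ->] vA]].
    by rewrite uA AC.
  by rewrite vA AC.
have closedA : closed (pairs_rel F') A.
  have wf' : edges_within e S F' := edges_within_cut A (C :\: A) wf.
  apply: intro_closed; first exact: sym_connect_sym (edges_within_sym wf').
  move=> u v; rewrite /pairs_rel inE => /andP[uv_AC uvF] uA.
  apply: contraR uv_AC => vA.
  by rewrite !inE /= uA vA (closedC u v uvF (AC u uA)).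
have sub : disconnected_pairs S F :|: cut_pairs A (C :\: A)
    \subset disconnected_pairs S F'.
  apply/subsetP => -[u v]; rewrite in_setU => /orP[|/cutP[uC vC uv_A]].
    rewrite !inE /= => /andP[-> not_uv]; apply: contra not_uv.
    by apply: connect_pairs_sub; apply/subsetP => p; rewrite inE => /andP[].
  rewrite inE /= !CS //=; apply: contra uv_A => /(closed_connect closedA) ->.
  by rewrite eqxx.
have disj : [disjoint disconnected_pairs S F & cut_pairs A (C :\: A)].
  apply/pred0P => -[u v] /=; rewrite [_ \in disconnected_pairs _ _]inE /=.
  apply/negP => /andP[/andP[_ /negP not_uv] /cutP[uC vC _]].
  by apply: not_uv; apply: connC.
have dAC : [disjoint A & C :\: A].
  by apply/pred0P => u /=; rewrite !inE; case: (u \in A); rewrite ?andbF.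
move: (subset_leq_card sub); rewrite cardsU (disjoint_setI0 disj) cards0 subn0.
by rewrite card_cut_pairs.
Qed.

Lemma card_pairs_sum (P : rel T) :
  #|[set p : T * T | P p.1 p.2]| = (\sum_u #|[set v | P u v]|)%N.
Proof.
rewrite -sum1_card; under [in RHS]eq_bigr => u _ do rewrite -sum1_card.
by rewrite pair_big_dep /=; apply: eq_bigl => -[u v]; rewrite !inE.
Qed.

End PairSets.

Lemma boundary_pairs_lb (R : realFieldType) (T : finType) (e : rel T)
    (S : {set T}) (D : R) :
  (forall x, D <= (deg e x)%:R) ->
  #|~: S|%:R * (D - #|~: S|%:R) <= #|boundary_pairs e S|%:R.
Proof.
move=> degD.
rewrite (card_pairs_sum (fun u v => e u v && (u \notin S) && (v \in S))).
rewrite natr_sum -{1}sum1_card natr_sum mulr_suml.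
rewrite big_mkcond /=; apply: ler_sum => u _; case: ifP => [uS | _]; last exact: ler0n.
rewrite mul1r lerBlDr -natrD; apply: le_trans (degD u) _; rewrite ler_nat.
apply: leq_trans (leq_of_leqif (leq_card_setU _ (~: S))).
apply: subset_leq_card; apply/subsetP => v; rewrite !inE -in_setC uS => ->.
by case: (v \in S).
Qed.

Lemma disconnected_pairs_le (T : finType) (S : {set T}) (F : {set T * T}) :
  (#|disconnected_pairs S F| <= #|T| * #|T|)%N.
Proof. by rewrite -card_prod max_card. Qed.

Section Potential.

Variables (R : realFieldType) (T : finType) (e : rel T) (rho c : R) (M : nat).
Implicit Types (S : {set T}) (F : {set T * T}).

Definition potential S F : R :=
  (lost_pairs e S F)%:R - rho * #|disconnected_pairs S F|%:R - c * #|~: S|%:R.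

Definition admissible S F := edges_within e S F && (#|~: S| <= M)%N.

Lemma admissible_full : symmetric e -> admissible [set: T] [set p | e p.1 p.2].
Proof. by move=> esym; rewrite /admissible edges_within_full // setCT cards0. Qed.

Lemma exists_minimal_state : symmetric e ->
  exists S F, admissible S F /\
    forall S' F', admissible S' F' -> potential S F <= potential S' F'.
Proof.
move=> esym; pose adm (z : {set T} * {set T * T}) := admissible z.1 z.2.
have [[S F] admSF minSF] :=
  arg_minP (fun z => potential z.1 z.2) (admissible_full esym : adm (_, _)).
by exists S, F; split=> // S' F'; apply: (minSF (S', F')).
Qed.

Hypothesis rho_ge0 : 0 <= rho.

Lemma potential_full_le0 : potential [set: T] [set p | e p.1 p.2] <= 0.
Proof.
rewrite /potential; have -> : lost_pairs e [set: T] [set p | e p.1 p.2] = 0%N.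
  apply/eqP; rewrite addn_eq0 !cards_eq0; apply/andP; split; apply/eqP/setP => p.
    by rewrite !inE andbF.
  by rewrite !inE; case: (e p.1 p.2).
by rewrite setCT cards0 mulr0 subr0 sub0r oppr_le0 mulr_ge0.
Qed.

Lemma deleted_bound S F (D : R) : (forall x, D <= (deg e x)%:R) ->
  potential S F <= 0 ->
  #|~: S|%:R * (D - c - #|~: S|%:R) <= rho * (#|T|%:R * #|T|%:R).
Proof.
move=> degD; rewrite /potential.
have lost_lb : #|~: S|%:R * (D - #|~: S|%:R) <= (lost_pairs e S F)%:R.
  by apply: le_trans (boundary_pairs_lb S degD) _; rewrite ler_nat leq_addr.
have dis_ub : rho * #|disconnected_pairs S F|%:R <= rho * (#|T|%:R * #|T|%:R).
  by rewrite -natrM ler_wpM2l // ler_nat disconnected_pairs_le.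
lra.
Qed.

Section Minimal.

Variables (S : {set T}) (F : {set T * T}).
Hypotheses (admSF : admissible S F)
  (minSF : forall S' F', admissible S' F' -> potential S F <= potential S' F').

Lemma minimal_potential_le0 : symmetric e -> potential S F <= 0.
Proof.
by move=> esym; apply: le_trans (minSF (admissible_full esym)) potential_full_le0.
Qed.

Lemma minimal_cut_dense x :
  cut_dense rho (pairs_rel F) (component S (pairs_rel F) x).
Proof.
move: admSF => /andP[wf mM] A sAC.
set C := component S (pairs_rel F) x in sAC *.
have adm_cut : admissible S (F :\: cut_pairs A (C :\: A)).
  by rewrite /admissible edges_within_cut.
have := minSF adm_cut; rewrite /potential.
have := lost_pairs_cut A (C :\: A) wf; rewrite -(ler_nat R) natrD natrM.
have := disconnected_pairs_cut wf sAC; rewrite -/C -(ler_nat R) natrD !natrM.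
move=> /(ler_wpM2l rho_ge0) dis_cut lost_cut min_cut.
lra.
Qed.

Lemma minimal_deg_lb x : (#|~: S| < M)%N -> x \in S ->
  c - 2 * rho * #|T|%:R <= (deg (pairs_rel F) x)%:R.
Proof.
move: admSF => /andP[wf _] mM xS.
have cardC : #|~: (S :\ x)| = #|~: S|.+1 by rewrite setCD setUC cardsU1 inE xS.
have adm_del : admissible (S :\ x) (del_pairs F x).
  by rewrite /admissible edges_within_del //= cardC.
have := minSF adm_del; rewrite /potential cardC -addn1 natrD.
have := lost_pairs_del wf xS; rewrite -(ler_nat R) natrD.
have := disconnected_pairs_del S F x; rewrite -(ler_nat R) natrD natrM.
move=> /(ler_wpM2l rho_ge0) dis_del lost_del min_del.
lra.
Qed.

End Minimal.

End Potential.

Lemma few_deleted (R : realFieldType) (beta k n m : R) :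
  0 < beta -> 2 < beta * k -> 0 <= m <= beta * k -> 0 <= n <= 100%:R * k ->
  m * (200%:R * beta * k - m) <= beta ^+ 2 / 20000%:R * (n * n) ->
  m <= 200%:R * beta * n /\ m < beta * k - 1.
Proof.
move=> beta_gt0 bk_gt2 /andP[m_ge0 m_le] /andP[n_ge0 n_le] key.
have bn_ge0 : 0 <= beta * n by rewrite mulr_ge0 // ltW.
have bn_le : beta * n <= 100%:R * (beta * k) by rewrite mulrCA ler_wpM2l // ltW.
have lhs_lb : 199%:R * (beta * k) * m <= m * (200%:R * beta * k - m).
  have : 0 <= m * (beta * k - m) by rewrite mulr_ge0 // subr_ge0.
  lra.
have rhs_ub : beta ^+ 2 / 20000%:R * (n * n) <= (beta * n / 200%:R) * (beta * k).
  have -> : beta * n / 200%:R * (beta * k) = beta ^+ 2 / 20000%:R * (n * (100%:R * k)).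
    by field.
  by rewrite ler_wpM2l ?ler_wpM2l // divr_ge0 // exprn_ge0 // ltW.
have m_small : 199%:R * m <= beta * n / 200%:R.
  rewrite -(ler_pM2r (_ : 0 < beta * k)); lra.
lra.
Qed.

Lemma eventually_mulr_gt (R : archiNumFieldType) (x y : R) : 0 < x -> 0 <= y ->
  exists k0 : nat, forall k, (k0 <= k)%N -> y < x * k%:R.
Proof.
move=> x_gt0 y_ge0; exists (Num.bound (y / x)) => k k0k.
rewrite mulrC -ltr_pdivrMr //; apply: lt_le_trans (archi_boundP _) _.
  by rewrite divr_ge0 // ltW.
by rewrite ler_nat.
Qed.

Theorem lemma5p3 (R : realType) (eps beta : R) :
  0 < eps -> eps < 1 -> 0 < beta -> beta < eps / 400%:R ->
  exists k0 : nat, forall (k : nat) (a : R), (k0 <= k)%N -> 2^-1 <= a ->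
  forall (T : finType) (e : rel T), simple_graph e ->
    (forall x : T, (a + eps) * k%:R <= (deg e x)%:R) ->
    (#|T|%:R <= 100%:R * k%:R :> R) ->
    exists (S : {set T}) (f : rel T),
      [/\ subgraph_of e S f,
          (#|~: S|%:R <= 200%:R * beta * #|T|%:R :> R),
          (forall x, x \in S -> (a + eps - 400%:R * beta) * k%:R <= (deg f x)%:R) &
          (forall x, x \in S -> cut_dense (beta ^+ 2 / 20000%:R) f (component S f x))].
Proof.
move=> eps_gt0 eps_lt1 beta_gt0 beta_lt.
have beta_lt1 : beta < 1 by move: beta_lt; rewrite ltr_pdivlMr //; lra.
have [k0 k0P] := eventually_mulr_gt beta_gt0 (ler0n R 2).
exists k0 => k a /k0P bk_gt2 _ T e [esym _] degG cardT.
set rho := beta ^+ 2 / 20000%:R; set M := Num.truncn (beta * k%:R).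
set c := (a + eps) * k%:R - 200%:R * beta * k%:R.
have rho_ge0 : 0 <= rho by rewrite divr_ge0 // exprn_ge0 // ltW.
have /andP[M_le M_gt] := truncn_itv (mulr_ge0 (ltW beta_gt0) (ler0n R k)).
have [S [F [admSF minSF]]] := exists_minimal_state rho c M esym.
have [deleted_le deleted_lt] : #|~: S|%:R <= 200%:R * beta * #|T|%:R
    /\ #|~: S|%:R < beta * k%:R - 1.
  apply: few_deleted; rewrite ?ler0n ?cardT //=.
    by apply: le_trans M_le; rewrite ler_nat; case/andP: admSF.
  have := deleted_bound rho_ge0 degG (minimal_potential_le0 rho_ge0 minSF esym).
  by rewrite /c -/rho opprB addrCA subrr addr0.
exists S, (pairs_rel F); split => //.
- by case/andP: admSF => /edges_within_subgraph.
- move=> x xS; apply: le_trans (minimal_deg_lb rho_ge0 admSF minSF _ xS); last first.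
    by rewrite -(ltr_nat R); lra.
  have : rho * #|T|%:R <= rho * (100%:R * k%:R) by rewrite ler_wpM2l.
  have -> : rho * (100%:R * k%:R) = beta / 200%:R * (beta * k%:R).
    by rewrite /rho; field.
  rewrite /c; nra.
- by move=> x _; apply: (minimal_cut_dense rho_ge0 admSF minSF).
Qed.
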